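(* The class AsLimSup is closed under $\max$, and the class PosLimInf is closed under $\min$.
   Context: A probabilistic weighted automaton over a finite alphabet $\Sigma$ is a tuple $A=(Q,\rho_I,\Sigma,\delta,\gamma)$ where $Q$ is a finite set of states, $\rho_I$ is a probability distribution on $Q$, $\delta:Q\times\Sigma\to\mathcal D(Q)$ assigns to each state and letter a probability distribution on $Q$, and $\gamma:Q\times\Sigma\times Q\to\mathbb Q$ is a weight function. A run over an infinite word $w=\sigma_1\sigma_2\dots$ is a sequence $r=q_0\sigma_1q_1\sigma_2\dots$ with $\rho_I(q_0)>0$ and $\delta(q_i,\sigma_{i+1})(q_{i+1})>0$ for all $i$; its weight sequence is $\gamma(r)=v_0v_1\dots$ with $v_i=\gamma(q_i,\sigma_{i+1},q_{i+1})$. For each $w$, the probabilities of finite run prefixes induce a probability measure $\mathbb P^A$ on runs over $w$. For a value function $\mathrm{Val}$, positive semantics: $L^{>0}_A(w)=\sup\{\eta\mid \mathbb P^A(\{r:\mathrm{Val}(\gamma(r))\ge\eta\})>0\}$; almost-sure semantics: $L^{=1}_A(w)=\sup\{\eta\mid \mathbb P^A(\{r:\mathrm{Val}(\gamma(r))\ge\eta\})=1\}$. $\mathsf{LimSup}(v)=\limsup_n v_n$, $\mathsf{LimInf}(v)=\liminf_n v_n$. AsLimSup is the class of $\mathsf{LimSup}$-automata under almost-sure semantics; PosLimInf is the class of $\mathsf{LimInf}$-automata under positive semantics. A class $\mathcal C$ is closed under $\max$ (resp. $\min$) if for any $A_1,A_2\in\mathcal C$ over the same alphabet there is $A\in\mathcal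 C$ with $L_A(w)=\max\{L_{A_1}(w),L_{A_2}(w)\}$ (resp. $\min$) for all words $w$. *)

From HB Require Import structures.
From mathcomp Require Import all_boot all_order all_algebra.
From mathcomp Require Import all_classical all_reals all_analysis.

Set Implicit Arguments.
Unset Strict Implicit.
Unset Printing Implicit Defensive.

Import Order.TTheory GRing.Theory Num.Theory.
Local Open Scope classical_set_scope.
Local Open Scope ring_scope.

Definition is_distr (R : realType) (Q : finType) (d : Q -> R) : Prop :=
  (forall q, 0 <= d q) /\ \sum_(q : Q) d q = 1.

(** Probabilistic weighted automata over the finite alphabet [Sigma].
    [st] is the finite set of states Q; [st0] is an (arbitrary) element of Q,
    recorded only so that the run space is a pointed type (Q is nonempty anyway
    since [rhoI] is a distribution on it); it plays no semantic role. *)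
Record pwa (Sigma : finType) (R : realType) := PWA {
  st : finType;
  st0 : st;
  rhoI : st -> R;
  delta : st -> Sigma -> st -> R;
  gamma : st -> Sigma -> st -> rat;
  rhoI_distr : is_distr rhoI;
  delta_distr : forall q a, is_distr (delta q a)
}.
Arguments st {Sigma R} p.
Arguments st0 {Sigma R} p.
Arguments rhoI {Sigma R} p _.
Arguments delta {Sigma R} p _ _ _.
Arguments gamma {Sigma R} p _ _ _.

Section Runs.
Variables (Sigma : finType) (R : realType) (A : pwa Sigma R).

(** Runs r = q0 q1 q2 ... are state sequences; the letters are those of the word. *)
Definition runs := nat -> st A.
HB.instance Definition _ := gen_eqMixin runs.
HB.instance Definition _ := gen_choiceMixin runs.
HB.instance Definition _ := isPointed.Build runs (fun _ => st0 A).

Definition cylinder (s : seq (st A)) : set runs :=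
  [set r | forall i, (i < size s)%N -> r i = nth (st0 A) s i].

(** probability of the finite run prefix s over the word w:
    rhoI(q0) * prod_i delta(q_i, w_i)(q_{i+1})  (letters w_0 w_1 ... = sigma_1 sigma_2 ...) *)
Definition prefix_prob (w : nat -> Sigma) (s : seq (st A)) : R :=
  match s with
  | [::] => 1
  | q0 :: t => rhoI A q0 *
      \prod_(i < size t) delta A (nth (st0 A) s i) (w i) (nth (st0 A) s i.+1)
  end.

Notation RunSpace := (g_sigma_algebraType (range cylinder)).
Definition is_run_measure (w : nat -> Sigma) (P : probability RunSpace R) : Prop :=
  forall s : seq (st A), P (cylinder s) = (prefix_prob w s)%:E.

(** weight sequence gamma(r) = v0 v1 ... with v_i = gamma(q_i, sigma_{i+1}, q_{i+1}) *)
Definition weight_seq (w : nat -> Sigma) (r : runs) : nat -> R :=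
  fun i => ratr (gamma A (r i) (w i) (r i.+1)).

End Runs.
Arguments cylinder {Sigma R} A s.
Arguments prefix_prob {Sigma R} A w s.
Arguments is_run_measure {Sigma R} A w P.
Arguments weight_seq {Sigma R} A w r _.

Notation RunSpace A := (g_sigma_algebraType (range (@cylinder _ _ A))).

Definition LimSup (R : realType) (v : nat -> R) : \bar R := limn_esup (fun n => (v n)%:E).
Definition LimInf (R : realType) (v : nat -> R) : \bar R := limn_einf (fun n => (v n)%:E).

Definition L_pos (Sigma : finType) (R : realType) (A : pwa Sigma R)
  (Val : (nat -> R) -> \bar R) (w : nat -> Sigma) (P : probability (RunSpace A) R) : \bar R :=
  ereal_sup [set eta%:E | eta in
    [set eta : R | (0 < P [set r : RunSpace A | (eta%:E <= Val (weight_seq A w r))%E])%E]].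

Definition L_as (Sigma : finType) (R : realType) (A : pwa Sigma R)
  (Val : (nat -> R) -> \bar R) (w : nat -> Sigma) (P : probability (RunSpace A) R) : \bar R :=
  ereal_sup [set eta%:E | eta in
    [set eta : R | P [set r : RunSpace A | (eta%:E <= Val (weight_seq A w r))%E] = 1%E]].

Definition closed_under (R : realType)
  (sem : forall (Sigma : finType) (A : pwa Sigma R), (nat -> Sigma) ->
           probability (RunSpace A) R -> \bar R)
  (op : \bar R -> \bar R -> \bar R) : Prop :=
  forall (Sigma : finType) (A1 A2 : pwa Sigma R),
  exists A : pwa Sigma R,
  forall (w : nat -> Sigma) (P : probability (RunSpace A) R)
         (P1 : probability (RunSpace A1) R) (P2 : probability (RunSpace A2) R),
    is_run_measure A w P -> is_run_measure A1 w P1 -> is_run_measure A2 w P2 ->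
    sem Sigma A w P = op (sem Sigma A1 w P1) (sem Sigma A2 w P2).

Definition AsLimSup_sem (R : realType) (Sigma : finType) (A : pwa Sigma R) w P :=
  @L_as Sigma R A (@LimSup R) w P.
Definition PosLimInf_sem (R : realType) (Sigma : finType) (A : pwa Sigma R) w P :=
  @L_pos Sigma R A (@LimInf R) w P.

From HB Require Import structures.
From mathcomp Require Import all_boot all_order all_algebra.
From mathcomp Require Import all_classical all_reals all_analysis.
From mathcomp Require Import measurable_realfun.

(** Both closures are realised by the synchronous product of [A1] and [A2]
    whose transitions carry the max (resp. min) of the two weights.  Under
    the run measure of the product, the two projections of a run are
    independent with laws the run measures of [A1] and [A2]: this holds on
    cylinders because the transition probabilities of the product factor,
    and extends to all measurable sets by the pi-lambda theorem.

    Since [LimSup] of a pointwise max is the max of the [LimSup]s, the event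
    "[LimSup >= eta]" of the product is the union of the corresponding events
    of the components; its complement is an intersection of independent
    events, which is null iff one of them is.  So the set of thresholds
    reached almost surely by the product is the union of those of [A1] and
    [A2], whose supremum is the max.  Dually, [LimInf] of a min is the min of
    the [LimInf]s, an intersection of independent events has positive
    probability iff both do, and the sets of thresholds reached with positive
    probability are down-closed, so the supremum of their intersection is the
    min of the suprema. *)

Set Implicit Arguments.
Unset Strict Implicit.
Unset Printing Implicit Defensive.

Import Order.TTheory GRing.Theory Num.Theory.
Local Open Scope classical_set_scope.
Local Open Scope ring_scope.

Lemma fsbig_setT (V : Type) (idx : V) (op : Monoid.com_law idx) (T : finType)
    (F : T -> V) :
  \big[op/idx]_(i \in [set: T]) F i = \big[op/idx]_(i : T) F i.
Proof.
rewrite (fsbigE (enum T)) ?enum_uniq //; last by move=> i _; rewrite mem_enum.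
by rewrite big_enum_cond; apply: eq_bigl => i; rewrite in_setT.
Qed.

Lemma probability_EFin d (T : measurableType d) (R : realType)
    (P : probability T R) (X : set T) :
  measurable X -> exists p : R, P X = p%:E.
Proof. by move=> mX; exists (fine (P X)); rewrite fineK // fin_num_measure. Qed.

Lemma probability_eq1_setC d (T : measurableType d) (R : realType)
    (P : probability T R) (X : set T) :
  measurable X -> P X = 1%E <-> P (~` X) = 0%E.
Proof.
move=> mX; rewrite probability_setC //; have [p ->] := probability_EFin P mX.
by rewrite -EFinB; split => [[->]|[/eqP]]; rewrite ?subrr // subr_eq0 => /eqP <-.
Qed.

Section PrefixPairs.
Variables (T1 T2 : finType) (V : nmodType).
Variables (f g : seq T1 -> seq T2 -> V).
Hypotheses (f_rconsl : forall s1 s2, f s1 s2 = \sum_(q : T1) f (rcons s1 q) s2)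
           (f_rconsr : forall s1 s2, f s1 s2 = \sum_(q : T2) f s1 (rcons s2 q))
           (g_rconsl : forall s1 s2, g s1 s2 = \sum_(q : T1) g (rcons s1 q) s2)
           (g_rconsr : forall s1 s2, g s1 s2 = \sum_(q : T2) g s1 (rcons s2 q))
           (eq_fg_size : forall s1 s2, size s1 = size s2 -> f s1 s2 = g s1 s2).

Lemma eq_prefix_pair_fun s1 s2 : f s1 s2 = g s1 s2.
Proof.
have extl k : forall s1 s2, (size s1 + k)%N = size s2 -> f s1 s2 = g s1 s2.
  elim: k => [|k IH] t1 t2; first by rewrite addn0; exact: eq_fg_size.
  move=> sz; rewrite f_rconsl g_rconsl; apply: eq_bigr => q _.
  by apply: IH; rewrite size_rcons addSnnS.
have extr k : forall s1 s2, (size s2 + k)%N = size s1 -> f s1 s2 = g s1 s2.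
  elim: k => [|k IH] t1 t2; first by rewrite addn0 => /esym; exact: eq_fg_size.
  move=> sz; rewrite f_rconsr g_rconsr; apply: eq_bigr => q _.
  by apply: IH; rewrite size_rcons addSnnS.
have [le12|lt21] := leqP (size s1) (size s2).
  by apply: (extl (size s2 - size s1)%N); rewrite subnKC.
by apply: (extr (size s1 - size s2)%N); rewrite subnKC // ltnW.
Qed.

End PrefixPairs.

Section Cylinders.
Variables (Sigma : finType) (R : realType) (A : pwa Sigma R).
Implicit Types (s t : seq (st A)) (w : nat -> Sigma).

Lemma cylinderE s : cylinder A s = [set r | mkseq r (size s) = s].
Proof.
apply/seteqP; split => r /=; last first.
  by move=> <- i; rewrite size_mkseq => lt_is; rewrite nth_mkseq.
move=> rs; apply: (@eq_from_nth _ (st0 A)); first by rewrite size_mkseq.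
by move=> i; rewrite size_mkseq => lt_is; rewrite nth_mkseq // rs.
Qed.

Lemma cylinder_nil : cylinder A [::] = setT.
Proof. by apply/seteqP; split => r //= _ i. Qed.

Lemma measurable_cylinder s : @measurable _ (RunSpace A) (cylinder A s).
Proof. by apply: sub_sigma_algebra; exists s. Qed.

Lemma measurable_prefix_set n (p : seq (st A) -> Prop) :
  @measurable _ (RunSpace A) [set r | p (mkseq r n)].
Proof.
have -> : [set r : RunSpace A | p (mkseq r n)] =
    \bigcup_(t in [set t : n.-tuple (st A) | p t]) cylinder A t.
  apply/seteqP; split => r /=; last first.
    by case=> t /= pt; rewrite cylinderE /= size_tuple => ->.
  move=> pr; have sz : size (mkseq r n) == n by rewrite size_mkseq.
  by exists (Tuple sz) => //=; rewrite cylinderE /= (eqP sz).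
apply: fin_bigcup_measurable; first exact: finite_finset.
by move=> t _; apply: measurable_cylinder.
Qed.

Lemma measurable_fun_prefix d (T : measurableType d) n (g : seq (st A) -> T) :
  measurable_fun setT (fun r : RunSpace A => g (mkseq r n)).
Proof.
by move=> _ Y _; rewrite setTI; exact: (measurable_prefix_set n (fun t => Y (g t))).
Qed.

Lemma cylinder_rcons s :
  cylinder A s = \bigcup_(q in [set: st A]) cylinder A (rcons s q).
Proof.
apply/seteqP; split => r /=; last first.
  move=> [q _ rsq] i lt_is; rewrite rsq ?nth_rcons ?lt_is //.
  by rewrite size_rcons ltnS ltnW.
move=> rs; exists (r (size s)) => // i; rewrite size_rcons ltnS leq_eqVlt.
case/orP => [/eqP ->|lt_is]; first by rewrite nth_rcons ltnn eqxx.
by rewrite nth_rcons lt_is rs.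
Qed.

Lemma trivIset_cylinder_rcons s :
  trivIset [set: st A] (fun q => cylinder A (rcons s q)).
Proof.
move=> q q' _ _ [r [rq rq']].
have := rq (size s); have := rq' (size s).
by rewrite !size_rcons !ltnSn !nth_rcons ltnn eqxx => <- // <-.
Qed.

Lemma prefix_prob_rcons w s q :
  prefix_prob A w (rcons s q) = prefix_prob A w s *
    (if s is q0 :: t then delta A (last q0 t) (w (size t)) q else rhoI A q).
Proof.
case: s => [|q0 t] /=; first by rewrite big_ord0 mulr1 mul1r.
rewrite size_rcons big_ord_recr /= -mulrA -!rcons_cons; congr (_ * (_ * _)).
  by apply: eq_bigr => i _; rewrite !nth_rcons /= !ltnS (ltnW (ltn_ord i)) ltn_ord.
by rewrite !nth_rcons /= ltnSn ltnn eqxx (last_nth q0) (set_nth_default q0).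
Qed.

Lemma sum_prefix_prob_rcons w s :
  \sum_(q : st A) prefix_prob A w (rcons s q) = prefix_prob A w s.
Proof.
under eq_bigr do rewrite prefix_prob_rcons.
rewrite -mulr_sumr; case: s => [|q0 t].
  by rewrite (proj2 (rhoI_distr A)) mulr1.
by rewrite (proj2 (delta_distr _ _)) mulr1.
Qed.

Definition cylinder_system : set (set (RunSpace A)) :=
  range (cylinder A) `|` [set set0].

Lemma RunSpace_measurableE : @measurable _ (RunSpace A) = <<s cylinder_system >>.
Proof.
apply/seteqP; split => X mX.
  by apply: (sub_sigma_algebra2 _ mX) => _ [s _ <-]; left; exists s.
apply: (smallest_sub _ _ mX); first exact: smallest_sigma_algebra.
by move=> _ [[s _ <-]|->]; [exact: measurable_cylinder|exact: measurable0].
Qed.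

Lemma cylinderI_le s t : (size s <= size t)%N ->
  cylinder A s `&` cylinder A t =
  if take (size s) t == s then cylinder A t else set0.
Proof.
move=> le_st; have take_mkseq r : take (size s) (mkseq r (size t)) = mkseq r (size s).
  by rewrite /mkseq -map_take take_iota (minn_idPl le_st).
rewrite !cylinderE; case: eqP => [ts|/eqP nts]; apply/seteqP; split => r //=.
- by case.
- by move=> rt; split => //; rewrite -take_mkseq rt ts.
- by case=> rs rt; move: nts; rewrite -rt take_mkseq rs eqxx.
Qed.

Lemma setI_closed_cylinder_system : setI_closed cylinder_system.
Proof.
have cyl_I_le s t : (size s <= size t)%N ->
    cylinder_system (cylinder A s `&` cylinder A t).
  by move=> le_st; rewrite cylinderI_le //; case: ifP; [left; exists t|right].
move=> _ _ [[s _ <-]|->] [[t _ <-]|->]; rewrite ?set0I ?setI0; try by right.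
have [le_st|lt_ts] := leqP (size s) (size t); first exact: cyl_I_le.
by rewrite setIC; apply: cyl_I_le; rewrite ltnW.
Qed.

Section PreimagesOfCylinders.
Variables (d : measure_display) (T : measurableType d) (h : T -> RunSpace A).
Hypothesis measurable_preimage : forall s, measurable (h @^-1` cylinder A s).

Lemma measurable_fun_cylinders : measurable_fun setT h.
Proof.
apply: (@measurability _ _ T (RunSpace A) setT h _ RunSpace_measurableE).
move=> _ [_ [[s _ <-]|->] <-].
  by rewrite setTI; apply: measurable_preimage.
by rewrite preimage_set0 setI0.
Qed.

Lemma measurable_preimage_cylinders S : measurable S -> measurable (h @^-1` S).
Proof. by move=> mS; rewrite -[_ @^-1` _]setTI; apply: measurable_fun_cylinders. Qed.

Lemma measure_preimage_cylinder_rcons (mu : {measure set T -> \bar R}) X s :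
  measurable X ->
  mu (X `&` h @^-1` cylinder A s) =
  (\sum_(q : st A) mu (X `&` h @^-1` cylinder A (rcons s q)))%E.
Proof.
move=> mX; rewrite cylinder_rcons preimage_bigcup setI_bigcupr.
rewrite measure_fin_bigcup ?fsbig_setT //; first exact: finite_finset.
  apply: trivIset_setIl => q q' _ _ [r [rq rq']].
  exact: (trivIset_cylinder_rcons (s := s) I I (ex_intro _ (h r) (conj rq rq'))).
by move=> q _; apply: measurableI.
Qed.

Variables (mu : probability T R) (Q : probability (RunSpace A) R) (Y : set T).
Hypotheses (mY : measurable Y)
  (mul_cylinder : forall s, mu (h @^-1` cylinder A s `&` Y) = (Q (cylinder A s) * mu Y)%E).

Lemma measure_preimageI_mul S :
  measurable S -> mu (h @^-1` S `&` Y) = (Q S * mu Y)%E.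
Proof.
rewrite RunSpace_measurableE; move: S; apply: (dynkin_induction
  (P := fun S => mu (h @^-1` S `&` Y) = (Q S * mu Y)%E)
  RunSpace_measurableE setI_closed_cylinder_system).
- by rewrite preimage_setT setTI probability_setT mul1e.
- move=> _ [[s _ <-]|->]; first exact: mul_cylinder.
  by rewrite preimage_set0 set0I !measure0 mul0e.
- move=> X mX mulX; have mhX := measurable_preimage_cylinders mX.
  have -> : h @^-1` (~` X) `&` Y = Y `\` h @^-1` X.
    by rewrite setDE setIC preimage_setC.
  have muD : mu (Y `\` h @^-1` X) = (mu Y - mu (Y `&` h @^-1` X))%E.
    by apply: measureD => //; exact: le_lt_trans (probability_le1 _ mY) (ltry 1).
  rewrite probability_setC // muD (setIC Y) mulX.
  have [[q ->] [m ->]] := (probability_EFin Q mX, probability_EFin mu mY).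
  by rewrite -!EFinM -EFinB mulrBl mul1r.
- move=> F mF tF mulF; rewrite preimage_bigcup setI_bigcupl.
  rewrite measure_bigcup //; last 2 first.
  + by move=> i _; apply: measurableI => //; apply: measurable_preimage_cylinders.
  + apply: trivIset_setIr => i j _ _ [x [Fi Fj]].
    by apply: tF => //; exists (h x).
  have [m muY] := probability_EFin mu mY.
  rewrite muY in mulF *; rewrite measure_bigcup // muleC -nneseriesZl //.
  by apply: eq_eseriesr => i _; rewrite muleC; exact: mulF.
Qed.

End PreimagesOfCylinders.

End Cylinders.

Section ProductAutomaton.
Variables (Sigma : finType) (R : realType).

Lemma is_distr_prod (Q1 Q2 : finType) (d1 : Q1 -> R) (d2 : Q2 -> R) :
  is_distr d1 -> is_distr d2 -> is_distr (fun q : Q1 * Q2 => d1 q.1 * d2 q.2).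
Proof.
move=> [d1_ge0 d1_sum] [d2_ge0 d2_sum]; split => [q|]; first exact: mulr_ge0.
rewrite -(pair_big xpredT xpredT (fun i j => d1 i * d2 j)) -big_distrlr /=.
by rewrite d1_sum d2_sum mulr1.
Qed.

Definition pwa_prod (A1 A2 : pwa Sigma R) (op : rat -> rat -> rat) : pwa Sigma R :=
  @PWA Sigma R (st A1 * st A2)%type (st0 A1, st0 A2)
    (fun q => rhoI A1 q.1 * rhoI A2 q.2)
    (fun q a q' => delta A1 q.1 a q'.1 * delta A2 q.2 a q'.2)
    (fun q a q' => op (gamma A1 q.1 a q'.1) (gamma A2 q.2 a q'.2))
    (is_distr_prod (rhoI_distr A1) (rhoI_distr A2))
    (fun q a => is_distr_prod (delta_distr q.1 a) (delta_distr q.2 a)).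

Variables (A1 A2 : pwa Sigma R) (op : rat -> rat -> rat).
Local Notation A := (pwa_prod A1 A2 op).

Definition run_fst (r : runs A) : runs A1 := fun i => (r i).1.
Definition run_snd (r : runs A) : runs A2 := fun i => (r i).2.

Lemma preimage_run_fst_cylinder s :
  run_fst @^-1` cylinder A1 s = [set r | map fst (mkseq r (size s)) = s].
Proof. by rewrite cylinderE; apply/seteqP; split => r /=; rewrite /mkseq -map_comp. Qed.

Lemma preimage_run_snd_cylinder s :
  run_snd @^-1` cylinder A2 s = [set r | map snd (mkseq r (size s)) = s].
Proof. by rewrite cylinderE; apply/seteqP; split => r /=; rewrite /mkseq -map_comp. Qed.

Lemma measurable_preimage_run_fst s :
  @measurable _ (RunSpace A) (run_fst @^-1` cylinder A1 s).
Proof.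
rewrite preimage_run_fst_cylinder.
exact: (@measurable_prefix_set _ _ A (size s) (fun t => map fst t = s)).
Qed.

Lemma measurable_preimage_run_snd s :
  @measurable _ (RunSpace A) (run_snd @^-1` cylinder A2 s).
Proof.
rewrite preimage_run_snd_cylinder.
exact: (@measurable_prefix_set _ _ A (size s) (fun t => map snd t = s)).
Qed.

Lemma run_fstI_snd_cylinder s1 s2 : size s1 = size s2 ->
  run_fst @^-1` cylinder A1 s1 `&` run_snd @^-1` cylinder A2 s2 =
  cylinder A (zip s1 s2).
Proof.
move=> sz; rewrite preimage_run_fst_cylinder preimage_run_snd_cylinder cylinderE.
rewrite size_zip -sz minnn; apply/seteqP; split => r /=.
  by case=> r1 r2; rewrite -{2}r1 -r2 zip_unzip.
by move=> ->; split; [apply: unzip1_zip|apply: unzip2_zip]; rewrite sz.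
Qed.

Lemma prefix_prob_zip w s1 s2 : size s1 = size s2 ->
  prefix_prob A w (zip s1 s2) = prefix_prob A1 w s1 * prefix_prob A2 w s2.
Proof.
case: s1 s2 => [|a t1] [|b t2] //=; first by rewrite mulr1.
move=> [sz]; rewrite size_zip -sz minnn mulrACA -big_split /=; congr (_ * _).
apply: eq_bigr => i _.
by rewrite -[(a, b) :: _]/(zip (a :: t1) (b :: t2)) !nth_zip //= sz.
Qed.

Variables (w : nat -> Sigma) (P : probability (RunSpace A) R).
Hypothesis P_run : is_run_measure A w P.

Lemma measure_run_cylinders s1 s2 :
  P (run_fst @^-1` cylinder A1 s1 `&` run_snd @^-1` cylinder A2 s2) =
  (prefix_prob A1 w s1 * prefix_prob A2 w s2)%:E.
Proof.
apply: (@eq_prefix_pair_fun (st A1) (st A2) (\bar R)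
  (fun s1 s2 => P (run_fst @^-1` cylinder A1 s1 `&` run_snd @^-1` cylinder A2 s2))
  (fun s1 s2 => (prefix_prob A1 w s1 * prefix_prob A2 w s2)%:E)) => {s1 s2} s1 s2 /=.
- rewrite setIC measure_preimage_cylinder_rcons //.
  + by apply: eq_bigr => q _; rewrite setIC.
  + exact: measurable_preimage_run_fst.
  + exact: measurable_preimage_run_snd.
- rewrite measure_preimage_cylinder_rcons //.
  + exact: measurable_preimage_run_snd.
  + exact: measurable_preimage_run_fst.
- by rewrite sumEFin -mulr_suml sum_prefix_prob_rcons.
- by rewrite sumEFin -mulr_sumr sum_prefix_prob_rcons.
- by move=> sz; rewrite run_fstI_snd_cylinder // P_run prefix_prob_zip.
Qed.

Lemma measure_run_snd_cylinder s :
  P (run_snd @^-1` cylinder A2 s) = (prefix_prob A2 w s)%:E.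
Proof.
rewrite -[X in P X]setTI -(preimage_setT run_fst) -(cylinder_nil A1).
by rewrite measure_run_cylinders mul1r.
Qed.

Variable P1 : probability (RunSpace A1) R.
Hypothesis P1_run : is_run_measure A1 w P1.

Lemma measure_run_fstI_snd_cylinder (S : set (RunSpace A1)) s : measurable S ->
  P (run_fst @^-1` S `&` run_snd @^-1` cylinder A2 s) =
  (P1 S * P (run_snd @^-1` cylinder A2 s))%E.
Proof.
apply: measure_preimageI_mul => [s'||s']; first exact: measurable_preimage_run_fst.
  exact: measurable_preimage_run_snd.
by rewrite measure_run_cylinders P1_run measure_run_snd_cylinder.
Qed.

Lemma measure_run_fst (S : set (RunSpace A1)) :
  measurable S -> P (run_fst @^-1` S) = P1 S.
Proof.
move=> mS; have := measure_run_fstI_snd_cylinder [::] mS.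
by rewrite cylinder_nil !preimage_setT setIT probability_setT mule1.
Qed.

Variable P2 : probability (RunSpace A2) R.
Hypothesis P2_run : is_run_measure A2 w P2.

Lemma measure_run_fstI_snd (S1 : set (RunSpace A1)) (S2 : set (RunSpace A2)) :
  measurable S1 -> measurable S2 ->
  P (run_fst @^-1` S1 `&` run_snd @^-1` S2) = (P1 S1 * P2 S2)%E.
Proof.
move=> mS1 mS2; rewrite setIC muleC -measure_run_fst //.
apply: measure_preimageI_mul => // [s||s]; first exact: measurable_preimage_run_snd.
  exact: measurable_preimage_cylinders measurable_preimage_run_fst _ mS1.
rewrite setIC measure_run_fstI_snd_cylinder // measure_run_fst //.
by rewrite P2_run measure_run_snd_cylinder muleC.
Qed.

End ProductAutomaton.
Arguments run_fst {Sigma R A1 A2 op} r _.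
Arguments run_snd {Sigma R A1 A2 op} r _.

Section LimSupMax.
Variable R : realType.
Local Open Scope ereal_scope.
Implicit Types u v : (\bar R)^nat.

Lemma esups_max u v n :
  esups (fun k => maxe (u k) (v k)) n = maxe (esups u n) (esups v n).
Proof.
have ub (x : (\bar R)^nat) k : (n <= k)%N -> x k <= esups x n.
  by move=> nk; apply: ereal_sup_ubound; exists k.
apply/eqP; rewrite eq_le ge_max; apply/andP; split.
  by apply: ge_ereal_sup => _ [k /= nk <-]; apply: le_max2; apply: ub.
by apply/andP; split; apply: ge_ereal_sup => _ [k /= nk <-];
  apply: (le_trans _ (ub _ k nk)) => /=; rewrite le_max lexx ?orbT.
Qed.

Lemma limn_esup_max u v :
  limn_esup (fun k => maxe (u k) (v k)) = maxe (limn_esup u) (limn_esup v).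
Proof.
have esups_cvg (x : (\bar R)^nat) : esups x @ \oo --> limn_esup x.
  by rewrite limn_esup_lim; exact: is_cvg_esups.
rewrite limn_esup_lim.
have -> : esups (fun k => maxe (u k) (v k)) = fun n => maxe (esups u n) (esups v n).
  by apply/funext => n; exact: esups_max.
apply: cvg_lim => //; apply: continuous2_cvg (esups_cvg u) (esups_cvg v).
exact: (@max_continuous _ (\bar R) (limn_esup u, limn_esup v)).
Qed.

Lemma limn_einf_min u v :
  limn_einf (fun k => mine (u k) (v k)) = mine (limn_einf u) (limn_einf v).
Proof.
rewrite /limn_einf -oppe_max -limn_esup_max; congr (- limn_esup _).
by apply/funext => k /=; rewrite oppe_min.
Qed.

End LimSupMax.

Section WeightLevels.
Variables (Sigma : finType) (R : realType) (B : pwa Sigma R) (w : nat -> Sigma).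

Lemma measurable_fun_weight n :
  measurable_fun setT (fun r : RunSpace B => (weight_seq B w r n)%:E).
Proof.
pose g t := (ratr (gamma B (nth (st0 B) t n) (w n) (nth (st0 B) t n.+1)))%:E : \bar R.
rewrite (_ : (fun r => _) = fun r => g (mkseq r n.+2)).
  exact: (@measurable_fun_prefix _ _ B _ _ n.+2 g).
by apply/funext => r; rewrite /g !nth_mkseq.
Qed.

Lemma measurable_LimSup_ge eta :
  measurable [set r : RunSpace B | (eta%:E <= LimSup (weight_seq B w r))%E].
Proof.
have := measurable_fun_limn_esup measurable_fun_weight measurableT
  (emeasurable_itv `[eta%:E, +oo[).
by rewrite setTI; congr measurable; apply/seteqP; split => r; rewrite /= in_itv /= andbT.
Qed.

Lemma measurable_LimInf_ge eta :
  measurable [set r : RunSpace B | (eta%:E <= LimInf (weight_seq B w r))%E].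
Proof.
have mN n : measurable_fun setT (fun r : RunSpace B => - (weight_seq B w r n)%:E)%E.
  exact: measurableT_comp (measurable_fun_weight n).
have := measurable_fun_limn_esup mN measurableT (emeasurable_itv `]-oo, (- eta%:E)%E]).
rewrite setTI; congr measurable; apply/seteqP; split => r;
  by rewrite /= in_itv /= /LimInf /limn_einf leeNr.
Qed.

End WeightLevels.

Section Suprema.
Variable R : realType.
Local Open Scope ereal_scope.

Lemma ereal_sup_setU (S1 S2 : set (\bar R)) :
  ereal_sup (S1 `|` S2) = maxe (ereal_sup S1) (ereal_sup S2).
Proof.
apply/eqP; rewrite eq_le ge_max !ereal_sup_le ?andbT //.
by apply: ge_ereal_sup => x [S1x|S2x]; rewrite le_max; apply/orP; [left|right];
  apply: ereal_sup_ubound.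
Qed.

Definition down_closed (S : set R) := forall a b, (a <= b)%R -> S b -> S a.

Lemma down_closed_total (S1 S2 : set R) : down_closed S1 -> down_closed S2 ->
  S1 `<=` S2 \/ S2 `<=` S1.
Proof.
move=> dS1 dS2; have [|/nonsubset [a [S1a S2a]]] := pselect (S1 `<=` S2); first by left.
right => b S2b; have [le_ba|lt_ab] := leP b a; first exact: dS1 le_ba S1a.
by exfalso; apply: S2a; apply: dS2 (ltW lt_ab) S2b.
Qed.

Lemma ereal_sup_setI_down_closed (S1 S2 : set R) : down_closed S1 -> down_closed S2 ->
  ereal_sup (EFin @` (S1 `&` S2)) =
  mine (ereal_sup (EFin @` S1)) (ereal_sup (EFin @` S2)).
Proof.
move=> dS1 dS2; have sup_le (T1 T2 : set R) : T1 `<=` T2 ->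
    ereal_sup (EFin @` T1) <= ereal_sup (EFin @` T2).
  by move=> T12; apply/ereal_sup_le/image_subset.
have [S12|S21] := down_closed_total dS1 dS2.
  by rewrite (setIidl S12) min_l // sup_le.
by rewrite (setIidr S21) min_r // sup_le.
Qed.

End Suprema.

Section Closure.
Variables (Sigma : finType) (R : realType) (A1 A2 : pwa Sigma R) (w : nat -> Sigma).
Variables (P1 : probability (RunSpace A1) R) (P2 : probability (RunSpace A2) R).
Hypotheses (P1_run : is_run_measure A1 w P1) (P2_run : is_run_measure A2 w P2).

Section Max.
Local Notation A := (pwa_prod A1 A2 Order.max).
Variable P : probability (RunSpace A) R.
Hypothesis P_run : is_run_measure A w P.

Lemma LimSup_pwa_prod_max (r : runs A) :
  LimSup (weight_seq A w r) =
  maxe (LimSup (weight_seq A1 w (run_fst r))) (LimSup (weight_seq A2 w (run_snd r))).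
Proof.
rewrite /LimSup -limn_esup_max; congr limn_esup; apply/funext => n.
by rewrite /weight_seq /= maxr_rat EFin_max.
Qed.

Lemma as_LimSup_pwa_prod_max eta :
  P [set r : RunSpace A | (eta%:E <= LimSup (weight_seq A w r))%E] = 1%E <->
  P1 [set r : RunSpace A1 | (eta%:E <= LimSup (weight_seq A1 w r))%E] = 1%E \/
  P2 [set r : RunSpace A2 | (eta%:E <= LimSup (weight_seq A2 w r))%E] = 1%E.
Proof.
set E1 := [set r : RunSpace A1 | (eta%:E <= LimSup (weight_seq A1 w r))%E].
set E2 := [set r : RunSpace A2 | (eta%:E <= LimSup (weight_seq A2 w r))%E].
have mE1 : measurable E1 := measurable_LimSup_ge w eta.
have mE2 : measurable E2 := measurable_LimSup_ge w eta.
have -> : [set r : RunSpace A | (eta%:E <= LimSup (weight_seq A w r))%E] =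
    run_fst @^-1` E1 `|` run_snd @^-1` E2.
  by apply/seteqP; split => r; rewrite /= LimSup_pwa_prod_max le_max => /orP.
rewrite !probability_eq1_setC //; last first.
  apply: measurableU; apply: measurable_preimage_cylinders => //.
  - exact: measurable_preimage_run_fst.
  - exact: measurable_preimage_run_snd.
rewrite setCU [~` (run_fst @^-1` _)]preimage_setC [~` (run_snd @^-1` _)]preimage_setC
  (measure_run_fstI_snd P_run P1_run P2_run (measurableC mE1) (measurableC mE2)).
by split => [/eqP|[]->]; rewrite ?mul0e ?mule0 // mule_eq0 => /orP[]/eqP; [left|right].
Qed.

Lemma AsLimSup_sem_pwa_prod_max :
  AsLimSup_sem w P = Order.max (AsLimSup_sem w P1) (AsLimSup_sem w P2).
Proof.
rewrite /AsLimSup_sem /L_as -ereal_sup_setU -image_setU; congr (ereal_sup (_ @` _)).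
by apply/seteqP; split => eta /= /as_LimSup_pwa_prod_max.
Qed.

End Max.

Section Min.
Local Notation A := (pwa_prod A1 A2 Order.min).
Variable P : probability (RunSpace A) R.
Hypothesis P_run : is_run_measure A w P.

Lemma LimInf_pwa_prod_min (r : runs A) :
  LimInf (weight_seq A w r) =
  mine (LimInf (weight_seq A1 w (run_fst r))) (LimInf (weight_seq A2 w (run_snd r))).
Proof.
rewrite /LimInf -limn_einf_min; congr limn_einf; apply/funext => n.
by rewrite /weight_seq /= minr_rat EFin_min.
Qed.

Lemma pos_LimInf_pwa_prod_min eta :
  (0 < P [set r : RunSpace A | (eta%:E <= LimInf (weight_seq A w r))%E])%E <->
  (0 < P1 [set r : RunSpace A1 | (eta%:E <= LimInf (weight_seq A1 w r))%E])%E /\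
  (0 < P2 [set r : RunSpace A2 | (eta%:E <= LimInf (weight_seq A2 w r))%E])%E.
Proof.
set E1 := [set r : RunSpace A1 | (eta%:E <= LimInf (weight_seq A1 w r))%E].
set E2 := [set r : RunSpace A2 | (eta%:E <= LimInf (weight_seq A2 w r))%E].
have -> : [set r : RunSpace A | (eta%:E <= LimInf (weight_seq A w r))%E] =
    run_fst @^-1` E1 `&` run_snd @^-1` E2.
  by apply/seteqP; split => r; rewrite /= LimInf_pwa_prod_min le_min => /andP.
rewrite (measure_run_fstI_snd P_run P1_run P2_run
  (measurable_LimInf_ge w eta) (measurable_LimInf_ge w eta)).
split => [P_pos|[]]; last exact: mule_gt0.
by split; rewrite lt0e measure_ge0 andbT; apply: contraTneq P_pos => ->;
  rewrite ?mul0e ?mule0 ltxx.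
Qed.

Lemma down_closed_pos_LimInf (B : pwa Sigma R) (Q : probability (RunSpace B) R) :
  down_closed [set eta : R |
    (0 < Q [set r : RunSpace B | (eta%:E <= LimInf (weight_seq B w r))%E])%E].
Proof.
move=> a b le_ab /= Qb; apply: (lt_le_trans Qb); apply: le_measure.
- by rewrite inE; exact: measurable_LimInf_ge.
- by rewrite inE; exact: measurable_LimInf_ge.
- by move=> r /=; apply: le_trans; rewrite lee_fin.
Qed.

Lemma PosLimInf_sem_pwa_prod_min :
  PosLimInf_sem w P = Order.min (PosLimInf_sem w P1) (PosLimInf_sem w P2).
Proof.
rewrite /PosLimInf_sem /L_pos.
rewrite -(ereal_sup_setI_down_closed (down_closed_pos_LimInf (Q := P1))
                                     (down_closed_pos_LimInf (Q := P2))).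
congr (ereal_sup (_ @` _)).
by apply/seteqP; split => eta /= /pos_LimInf_pwa_prod_min.
Qed.

End Min.

End Closure.

Theorem lemma17 (R : realType) :
  closed_under (@AsLimSup_sem R) (fun x y => Order.max x y) /\
  closed_under (@PosLimInf_sem R) (fun x y => Order.min x y).
Proof.
split => Sigma A1 A2.
  exists (pwa_prod A1 A2 Order.max) => w P P1 P2 P_run P1_run P2_run.
  exact: AsLimSup_sem_pwa_prod_max.
exists (pwa_prod A1 A2 Order.min) => w P P1 P2 P_run P1_run P2_run.
exact: PosLimInf_sem_pwa_prod_min.
Qed.
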